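(* Let $\vec{\alpha}=\langle \alpha_s : s\in[\mathbb{N}]^{<\infty}\rangle$ be a sequence of nonstandard hypernatural numbers. For every $\mathcal{X}\subseteq[\mathbb{N}]^{\infty}$ and every $\vec{\alpha}$-tree $T$ there exists an $\vec{\alpha}$-tree $S\subseteq T$ with $st(S)=st(T)$ such that one of the following holds: (1) $[S]\subseteq\mathcal{X}$; (2) $[S]\cap\mathcal{X}=\emptyset$; (3) for every $\vec{\alpha}$-tree $S'$ with $S'\subseteq S$, both $[S']\not\subseteq\mathcal{X}$ and $[S']\cap\mathcal{X}\neq\emptyset$.
   Context: Setting (Alpha-Theory of Benci–Di Nasso): one works in ZFC together with a new symbol $\alpha$ satisfying: ($\alpha$1) every sequence $\varphi=\langle\varphi_i:i\in\mathbb{N}\rangle$ has a unique ''ideal value'' $\varphi[\alpha]$; ($\alpha$2) if $\varphi[\alpha]=\psi[\alpha]$ and $f$ is a function such that $f\circ\varphi$ and $f\circ\psi$ make sense, then $(f\circ\varphi)[\alpha]=(f\circ\psi)[\alpha]$; ($\alpha$3) for $r\in\mathbb{R}$ the constant sequence with value $r$ has ideal value $r$, and the sequence $\psi_i=i$ has ideal value $\alpha\notin\mathbb{N}$; ($\alpha$4) if $\vartheta_i=\{\varphi_i,\psi_i\}$ for all $i$ then $\vartheta[\alpha]=\{\varphi[\alpha],\psi[\alpha]\}$; ($\alpha$5) the constant sequence $\emptyset$ has ideal value $\emptyset$, and if every $\psi_i$ is a nonempty set then $\psi[\alpha]=\{\vartheta[\alpha]:\vartheta_i\in\psi_i\text{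 for all }i\}$. For a set $A$, ${}^*A$ denotes the ideal value of the constant sequence with value $A$; relations and operations are transformed the same way and the $*$ is dropped on them (e.g. $<$, $\cup$). ${}^*\mathbb{N}$ is the set of hypernatural numbers; elements of ${}^*\mathbb{N}\setminus\mathbb{N}$ are nonstandard hypernatural numbers. Notation: $[X]^{<\infty}$, $[X]^{\infty}$ are the finite, resp. infinite, subsets of $X\subseteq\mathbb{N}$. For finite $s$ and $X\subseteq\mathbb{N}$, $s\sqsubseteq X$ means $s=\{j\in X:j\le i\}$ for some $i\in\mathbb{N}$. A tree on $\mathbb{N}$ is a nonempty $T\subseteq[\mathbb{N}]^{<\infty}$ such that $s\sqsubseteq t\in T$ implies $s\in T$. $[T]=\{X\in[\mathbb{N}]^\infty:$ every finite $s\sqsubseteq X$ lies in $T\}$. The stem $st(T)$ of $T$, if it exists, is the $\sqsubseteq$-maximal $s\in T$ which is $\sqsubseteq$-comparable with every element of $T$; $T/s=\{t\in T:s\sqsubseteq t\}$. An $\vec{\alpha}$-tree is a tree $T$ on $\mathbb{N}$ with a stem $st(T)$ such that $T/st(T)\neq\emptyset$ and for all $s\in T/st(T)$, $s\cup\{\alpha_s\}\in{}^*T$. *)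

From mathcomp Require Import all_boot.
From mathcomp Require Import finmap.
From mathcomp Require Import boolp classical_sets cardinality.

Set Implicit Arguments.
Unset Strict Implicit.
Unset Printing Implicit Defensive.

Local Open Scope fset_scope.
Local Open Scope classical_set_scope.

(* Alpha-Theory is modelled by its ultrafilter:  U = { A | alpha \in *A }.
   A hypernatural number is the ideal value of a sequence of naturals
   (represented by the sequence), and membership statements transfer:
   phi[alpha] \in *A  <->  U [set i | phi i \in A]. *)
Definition nonprincipal_ultrafilter (U : set (set nat)) : Prop :=
  [/\ U setT /\ ~ U set0,
      (forall A B, A `<=` B -> U A -> U B),
      (forall A B, U A -> U B -> U (A `&` B)),
      (forall A, U A \/ U (~` A))
    & (forall n : nat, ~ U [set n])].

(* a sequence phi represents a nonstandard hypernatural: phi[alpha] <> n for all n *)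
Definition nonstandard (U : set (set nat)) (phi : nat -> nat) : Prop :=
  forall n : nat, U [set i | phi i <> n].

Definition init_seg (s : {fset nat}) (X : set nat) : Prop :=
  exists i : nat, forall j : nat, (j \in s) <-> (X j /\ (j < i)%N).

Definition fsset (t : {fset nat}) : set nat := [set j | j \in t].

Definition fsqsub (s t : {fset nat}) : Prop := init_seg s (fsset t).

Definition is_tree (T : set {fset nat}) : Prop :=
  (exists t, T t) /\ (forall s t, fsqsub s t -> T t -> T s).

Definition infinite_subset (X : set nat) : Prop := ~ finite_set X.

Definition body (T : set {fset nat}) : set (set nat) :=
  [set X | infinite_subset X /\ (forall s, init_seg s X -> T s)].

Definition comparable_all (T : set {fset nat}) (s : {fset nat}) : Prop :=
  forall t, T t -> fsqsub s t \/ fsqsub t s.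

Definition is_stem (T : set {fset nat}) (st : {fset nat}) : Prop :=
  [/\ T st, comparable_all T st &
      forall s', T s' -> comparable_all T s' -> fsqsub st s' -> s' = st].

Definition tree_above (T : set {fset nat}) (s : {fset nat}) : set {fset nat} :=
  [set t | T t /\ fsqsub s t].

(* alpha-tree, for alpha_s represented by the sequence (alpha s) *)
Definition alpha_tree (U : set (set nat)) (alpha : {fset nat} -> nat -> nat)
  (T : set {fset nat}) : Prop :=
  is_tree T /\
  exists st, [/\ is_stem T st, tree_above T st !=set0 &
    forall s, tree_above T st s -> U [set i | T (s `|` [fset alpha s i])%fset]].

From mathcomp Require Import all_boot.
From mathcomp Require Import finmap.
From mathcomp Require Import boolp classical_sets cardinality.
Local Open Scope classical_set_scope.

(* Call a node s of T decided for Q when some alpha-subtree of T with stem s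
   has all its branches in Q, and settled when it is decided for X or for its
   complement.  Decidedness propagates downwards: if U-many children
   s ∪ {alpha_s(i)} are decided for Q, grafting the witnessing subtrees onto s
   shows that s is decided for Q.  If the stem of T is settled we are in case
   (1) or (2).  Otherwise prune T to the nodes comparable with the stem none of
   whose segments above the stem is settled.  As the ultrafilter chooses
   between "decided for X", "decided for the complement" and "unsettled", an
   unsettled node has U-many unsettled children, so the pruned tree is an
   alpha-tree; and every alpha-subtree of it has an unsettled stem, which is
   case (3). *)

Definition below (a : nat) (s : {fset nat}) : Prop := forall x, x \in s -> (x < a)%N.

Lemma fsqsub_mem {s t x} : fsqsub s t -> x \in s -> x \in t.
Proof. by case=> i Hi /Hi []. Qed.

Lemma fsqsub_init_seg {s t X} : fsqsub s t -> init_seg t X -> init_seg s X.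
Proof.
case=> i Hi [k Hk]; exists (minn i k) => j; rewrite leq_min; split.
  by move=> /Hi [/Hk [? ?] ?]; split=> //; apply/andP.
by case=> Xj /andP[h1 h2]; apply/Hi; split=> //; apply/Hk.
Qed.

Lemma fsqsub_trans {s t u} : fsqsub s t -> fsqsub t u -> fsqsub s u.
Proof. exact: fsqsub_init_seg. Qed.

Lemma init_seg_total {s t X} : init_seg s X -> init_seg t X -> fsqsub s t \/ fsqsub t s.
Proof.
have shorter (s' t' : {fset nat}) i k : (i <= k)%N ->
    (forall j, j \in s' <-> X j /\ (j < i)%N) ->
    (forall j, j \in t' <-> X j /\ (j < k)%N) -> fsqsub s' t'.
  move=> hik Hi Hk; exists i => j; split.
    by move=> /Hi [? ?]; split=> //; apply/Hk; split=> //; apply: leq_trans hik.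
  by case=> /Hk [? ?] ?; apply/Hi.
case=> i Hi [k Hk]; case: (leqP i k) => hik.
  by left; apply: shorter hik Hi Hk.
by right; apply: shorter (ltnW hik) Hk Hi.
Qed.

Lemma fset_nat_bounded (s : {fset nat}) : exists m, below m s.
Proof.
exists (\sum_(x <- s) x).+1 => x hx; rewrite ltnS.
by rewrite (big_rem x hx) /= leq_addr.
Qed.

Lemma fsqsub_refl s : fsqsub s s.
Proof.
have [m hm] := fset_nat_bounded s; exists m => j.
by split=> [h|[]//]; split=> //; apply: hm.
Qed.

Lemma fsqsub_anti {s t} : fsqsub s t -> fsqsub t s -> s = t.
Proof.
by move=> st ts; apply/fsetP => x; apply/idP/idP; [exact: fsqsub_mem|exact: fsqsub_mem].
Qed.

Lemma fsqsub_extend {s a} : below a s -> fsqsub s (s `|` [fset a])%fset.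
Proof.
move=> ha; exists a => j; rewrite /fsset /= in_fsetU in_fset1; split.
  by move=> h; rewrite h; split=> //; apply: ha.
by case=> /orP[//| /eqP ->]; rewrite ltnn.
Qed.

Lemma fsqsub_extend_inj {s a b v} : below a s -> below b s ->
  fsqsub (s `|` [fset a])%fset v -> fsqsub (s `|` [fset b])%fset v -> a = b.
Proof.
have lt_contra a' b' : below a' s -> (a' < b')%N -> fsqsub (s `|` [fset a'])%fset v ->
    fsqsub (s `|` [fset b'])%fset v -> False.
  move=> ha hab ha'v [i Hi].
  have [_ bi] : fsset v b' /\ (b' < i)%N by apply/Hi; rewrite in_fsetU in_fset1 eqxx orbT.
  have av : a' \in v by apply: (fsqsub_mem ha'v); rewrite in_fsetU in_fset1 eqxx orbT.
  have : a' \in (s `|` [fset b'])%fset by apply/Hi; split; last exact: ltn_trans bi.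
  rewrite in_fsetU in_fset1 => /orP[/ha|/eqP e]; first by rewrite ltnn.
  by move: hab; rewrite e ltnn.
move=> ha hb hav hbv; case: (ltngtP a b) => // hab; exfalso.
  exact: lt_contra ha hab hav hbv.
exact: lt_contra hb hab hbv hav.
Qed.

Lemma fsqsub_extend_between {s u a} : fsqsub s u -> fsqsub u (s `|` [fset a])%fset ->
  u = s \/ u = (s `|` [fset a])%fset.
Proof.
move=> su ua; case: (boolP (a \in u)) => ha; [right|left];
  apply/fsetP => x; apply/idP/idP => hx.
- exact: fsqsub_mem ua hx.
- by move: hx; rewrite in_fsetU in_fset1 => /orP[/(fsqsub_mem su)|/eqP ->].
- have := fsqsub_mem ua hx; rewrite in_fsetU in_fset1 => /orP[//|/eqP e].
  by move: ha; rewrite -e hx.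
- exact: fsqsub_mem su hx.
Qed.

Lemma fsqsub_extend_above {s t a} :
  fsqsub t (s `|` [fset a])%fset \/ fsqsub (s `|` [fset a])%fset t ->
  fsqsub s t -> t <> s -> fsqsub (s `|` [fset a])%fset t.
Proof.
move=> [ta|//] st ts.
by case: (fsqsub_extend_between st ta) => // ->; apply: fsqsub_refl.
Qed.

Lemma infinite_init_seg_above {Y} m : infinite_subset Y ->
  exists u j, [/\ init_seg u Y, j \in u & (m <= j)%N].
Proof.
move=> hY; have [j [Yj mj]] : exists j, Y j /\ (m <= j)%N.
  apply: contrapT => hne; apply: hY.
  apply: (sub_finite_set _ (finite_II m)) => j Yj /=.
  by rewrite ltnNge; apply/negP => hmj; apply: hne; exists j.
exists (seq_fset tt [seq x <- iota 0 j.+1 | `[< Y x >]]), j.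
split=> //; last by rewrite seq_fsetE mem_filter mem_iota ltnSn leq0n !andbT; exact/asboolP.
exists j.+1 => x; rewrite seq_fsetE mem_filter mem_iota /=.
by split=> [/andP[/asboolP]|[/asboolP -> ->]].
Qed.

Section Ultrafilter.
Context {U : set (set nat)} (HU : nonprincipal_ultrafilter U).

Lemma uf_superset {A B} : A `<=` B -> U A -> U B.
Proof. by case: HU => _ h _ _ _; apply: h. Qed.

Lemma uf_setI {A B} : U A -> U B -> U (A `&` B).
Proof. by case: HU => _ _ h _ _; apply: h. Qed.

Lemma uf_dichotomy A : U A \/ U (~` A).
Proof. by case: HU. Qed.

Lemma uf_nonempty {A} : U A -> exists x, A x.
Proof.
move=> UA; apply: contrapT => hne; case: HU => [[_ U0]] _ _ _ _.
by apply: U0; apply: uf_superset UA => x Ax; apply: hne; exists x.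
Qed.

Lemma nonstandard_ge {phi} m : nonstandard U phi -> U [set i | (m <= phi i)%N].
Proof.
move=> hphi; elim: m => [|m IH].
  by case: (HU) => [[UT _]] _ _ _ _; apply: uf_superset UT.
apply: uf_superset (uf_setI IH (hphi m)) => i [/= h1 h2].
by rewrite ltn_neqAle h1 andbT; apply/eqP => e; apply: h2.
Qed.

Lemma nonstandard_above {phi} s : nonstandard U phi -> U [set i | below (phi i) s].
Proof.
move=> hphi; have [m hm] := fset_nat_bounded s.
by apply: uf_superset (nonstandard_ge m hphi) => i /= hi x /hm /leq_trans; apply.
Qed.

Lemma nonstandard_two_values {P phi} : U P -> nonstandard U phi ->
  exists i j, [/\ P i, P j & phi i <> phi j].
Proof.
move=> UP hphi; have [i Pi] := uf_nonempty UP.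
have [j [Pj hj]] := uf_nonempty (uf_setI UP (hphi (phi i))).
by exists i, j; split=> // e; apply: hj.
Qed.

End Ultrafilter.

Lemma is_stem_two_children W s : W s -> comparable_all W s ->
  (exists a b, [/\ a <> b, below a s, below b s,
                   W (s `|` [fset a])%fset & W (s `|` [fset b])%fset]) ->
  is_stem W s.
Proof.
move=> Ws hc [a [b [hab ha hb Wa Wb]]]; split=> // s' Ws' hs' ss'.
apply: contrapT => hne; apply: hab.
apply: (fsqsub_extend_inj ha hb).
  by apply: fsqsub_extend_above ss' hne; apply: hs'.
by apply: fsqsub_extend_above ss' hne; apply: hs'.
Qed.

Section AlphaTrees.
Variables (U : set (set nat)) (alpha : {fset nat} -> nat -> nat).
Hypothesis HU : nonprincipal_ultrafilter U.
Hypothesis Halpha : forall s, nonstandard U (alpha s).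

Definition alpha_branching (S : set {fset nat}) (st : {fset nat}) : Prop :=
  forall t, tree_above S st t -> U [set i | S (t `|` [fset alpha t i])%fset].

Lemma alpha_treeP S st :
  is_tree S -> is_stem S st -> alpha_branching S st -> alpha_tree U alpha S.
Proof.
move=> Stree Sstem Sbranch; split=> //; exists st; split=> //.
by exists st; split; [case: Sstem|apply: fsqsub_refl].
Qed.

Lemma branching_two_children {S : set {fset nat}} {s} :
  U [set i | S (s `|` [fset alpha s i])%fset] ->
  exists a b, [/\ a <> b, below a s, below b s,
                  S (s `|` [fset a])%fset & S (s `|` [fset b])%fset].
Proof.
move=> US; have US' := uf_setI HU US (nonstandard_above HU s (Halpha s)).
have [i [j [[Si hi] [Sj hj] hij]]] := nonstandard_two_values HU US' (Halpha s).
by exists (alpha s i), (alpha s j).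
Qed.

Variable T : set {fset nat}.
Hypothesis Ttree : is_tree T.

Definition decided_at (Q : set (set nat)) (s : {fset nat}) : Prop :=
  exists S, [/\ is_tree S, is_stem S s, alpha_branching S s, S `<=` T & body S `<=` Q].

Definition graft (s : {fset nat}) (P : set nat) (Sf : nat -> set {fset nat}) :
  set {fset nat} := [set t | fsqsub t s \/ exists2 a, P a & Sf a t].

Section Graft.
Context {s : {fset nat}} {P : set nat} {Sf : nat -> set {fset nat}}.
Hypothesis HSf : forall a, P a ->
  [/\ below a s, is_tree (Sf a) & is_stem (Sf a) (s `|` [fset a])%fset].

Lemma graft_comparable : comparable_all (graft s P Sf) s.
Proof.
move=> t [ts|[a Pa Sat]]; first by right.
have [ha _ [_ hc _]] := HSf _ Pa.
case: (hc _ Sat) => h; first by left; apply: fsqsub_trans (fsqsub_extend ha) h.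
exact: init_seg_total (fsqsub_extend ha) h.
Qed.

Lemma graft_tree : is_tree (graft s P Sf).
Proof.
split; first by exists s; left; apply: fsqsub_refl.
move=> u t ut [ts|[a Pa Sat]]; first by left; apply: fsqsub_trans ut ts.
have [_ [_ Sdown] _] := HSf _ Pa.
by right; exists a => //; apply: Sdown ut Sat.
Qed.

Lemma graft_extend_above {a t} : P a -> Sf a t -> fsqsub s t -> t <> s ->
  fsqsub (s `|` [fset a])%fset t.
Proof.
move=> Pa Sat st ts; have [_ _ [_ hc _]] := HSf _ Pa.
by apply: fsqsub_extend_above st ts; rewrite or_comm; apply: hc.
Qed.

(* Long enough initial segments of a branch lie above [s], and then in a
   single one of the grafted trees. *)
Lemma graft_body Y : body (graft s P Sf) Y -> exists2 a, P a & body (Sf a) Y.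
Proof.
move=> [infY hY]; have [m hm] := fset_nat_bounded s.
have [u [j [uY ju mj]]] := infinite_init_seg_above m infY.
have not_below v : fsqsub u v -> ~ fsqsub v s.
  by move=> uv /fsqsub_mem /(_ (fsqsub_mem uv ju)) /hm; rewrite ltnNge mj.
have above v : init_seg v Y -> fsqsub u v ->
    exists2 a, P a & Sf a v /\ fsqsub (s `|` [fset a])%fset v.
  move=> vY uv; case: (hY v vY) => [/(not_below v uv)//|[a Pa Sav]].
  exists a => //; split=> //; apply: graft_extend_above Pa Sav _ _.
    by case: (graft_comparable _ (hY v vY)) => // /(not_below v uv).
  by move=> vs; apply: (not_below v uv); rewrite vs; apply: fsqsub_refl.
have [a Pa [Sau au]] := above u uY (fsqsub_refl u).
exists a => //; split=> // v vY; have [ha [_ Sdown] _] := HSf _ Pa.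
case: (init_seg_total vY uY) => [vu|uv]; first exact: Sdown vu Sau.
have [b Pb [Sbv bv]] := above v vY uv; have [hb _ _] := HSf _ Pb.
by rewrite (fsqsub_extend_inj ha hb (fsqsub_trans au uv) bv).
Qed.

End Graft.

Lemma decided_from_children Q s : T s ->
  U [set i | below (alpha s i) s /\ decided_at Q (s `|` [fset alpha s i])%fset] ->
  decided_at Q s.
Proof.
move=> Ts Uch; pose P a := below a s /\ decided_at Q (s `|` [fset a])%fset.
have /choice[Sf HSf] : forall a, exists S : set {fset nat}, P a ->
    [/\ is_tree S, is_stem S (s `|` [fset a])%fset,
        alpha_branching S (s `|` [fset a])%fset, S `<=` T & body S `<=` Q].
  by move=> a; case: (pselect (P a)) => [[_ [S hS]]|nPa]; [exists S|exists set0].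
have Sf_child a : P a -> [/\ below a s, is_tree (Sf a) & is_stem (Sf a) (s `|` [fset a])%fset].
  by move=> Pa; have [? ? _ _ _] := HSf a Pa; split=> //; case: Pa.
have graft_child a : P a -> graft s P Sf (s `|` [fset a])%fset.
  by move=> Pa; right; exists a => //; have [_ [] ] := HSf a Pa.
have Uch' : U [set i | graft s P Sf (s `|` [fset alpha s i])%fset].
  by apply: (uf_superset HU _ Uch) => i; apply: graft_child.
exists (graft s P Sf); split.
- exact: graft_tree.
- apply: is_stem_two_children; [by left; apply: fsqsub_refl|exact: graft_comparable|].
  exact: branching_two_children Uch'.
- move=> t [Gt st]; case: (eqVneq t s) => [-> //|/eqP t_s].
  case: Gt => [ts|[a Pa Sat]]; first by case: t_s; apply: fsqsub_anti.
  have [_ _ Sbranch _ _] := HSf a Pa.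
  have sa_t := graft_extend_above Sf_child Pa Sat st t_s.
  apply: (uf_superset HU _ (Sbranch t (conj Sat sa_t))) => i Sc.
  by right; exists a.
- move=> t [ts|[a Pa Sat]]; first exact: Ttree.2 ts Ts.
  by have [_ _ _ ST _] := HSf a Pa; apply: ST.
- move=> Y /(graft_body Sf_child)[a Pa SY].
  by have [_ _ _ _ SQ] := HSf a Pa; apply: SQ.
Qed.

Section Pruning.
Variable Q : set (set nat).

Definition settled (u : {fset nat}) : Prop := decided_at Q u \/ decided_at (~` Q) u.

(* If U-many children are settled then U-many are settled the same way, and
   the node itself is settled by decided_from_children. *)
Lemma unsettled_children {t} : T t -> U [set i | T (t `|` [fset alpha t i])%fset] ->
  ~ settled t ->
  U [set i | T (t `|` [fset alpha t i])%fset /\ ~ settled (t `|` [fset alpha t i])%fset].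
Proof.
move=> Tt UT nt; case: (uf_dichotomy HU [set i | T (t `|` [fset alpha t i])%fset /\
                                   ~ settled (t `|` [fset alpha t i])%fset]) => // Uc.
have Usettled : U [set i | below (alpha t i) t /\ settled (t `|` [fset alpha t i])%fset].
  apply: (uf_superset HU _ (uf_setI HU (uf_setI HU Uc UT) (nonstandard_above HU t (Halpha t)))).
  by move=> i [[/= nTS Tc] hb]; split=> //; apply: contrapT => ns; apply: nTS.
case: (uf_dichotomy HU [set i | below (alpha t i) t /\
                                decided_at Q (t `|` [fset alpha t i])%fset]) => UQ.
  by case: nt; left; apply: decided_from_children.
case: nt; right; apply: decided_from_children => //.
apply: (uf_superset HU _ (uf_setI HU Usettled UQ)).
by move=> i [[hb [dQ|dnQ]] ndQ] //; case: ndQ.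
Qed.

Variable st : {fset nat}.
Hypotheses (Tst : T st) (Tbranch : alpha_branching T st) (st_unsettled : ~ settled st).

Definition pruned : set {fset nat} :=
  [set t | T t /\ (fsqsub st t \/ fsqsub t st) /\
           forall u, fsqsub st u -> fsqsub u t -> ~ settled u].

Lemma pruned_st : pruned st.
Proof.
split=> //; split; first by left; apply: fsqsub_refl.
by move=> u st_u u_st; rewrite (fsqsub_anti u_st st_u).
Qed.

Lemma pruned_tree : is_tree pruned.
Proof.
split; first by exists st; apply: pruned_st.
move=> u t ut [Tt [hc ht]]; split; first exact: Ttree.2 ut Tt.
split; last by move=> v st_v vu; apply: ht st_v (fsqsub_trans vu ut).
case: hc => [st_t|t_st]; last by right; apply: fsqsub_trans ut t_st.
by rewrite or_comm; apply: init_seg_total ut st_t.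
Qed.

Lemma pruned_branching : alpha_branching pruned st.
Proof.
move=> t [[Tt [_ ht]] st_t]; have nt := ht t st_t (fsqsub_refl t).
have Uch := unsettled_children Tt (Tbranch t (conj Tt st_t)) nt.
apply: (uf_superset HU _ (uf_setI HU Uch (nonstandard_above HU t (Halpha t)))).
move=> i [/= [Tc nc] hb]; split=> //; split.
  by left; apply: fsqsub_trans st_t (fsqsub_extend hb).
move=> u st_u uc; case: (init_seg_total uc (fsqsub_extend hb)) => [ut|tu].
  exact: ht st_u ut.
by case: (fsqsub_extend_between tu uc) => ->.
Qed.

Lemma pruned_stem : is_stem pruned st.
Proof.
apply: is_stem_two_children; [exact: pruned_st|by move=> t [_ []]|].
exact: branching_two_children (pruned_branching _ (conj pruned_st (fsqsub_refl st))).
Qed.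

(* A node strictly below [st] has at most one child in [pruned], namely the
   next initial segment of [st]; so it cannot be the stem of an alpha-tree. *)
Lemma pruned_subtree_stem_above {S s} : S `<=` pruned -> is_stem S s ->
  alpha_branching S s -> fsqsub st s.
Proof.
move=> Sp [Ss _ _] Sbranch; case: (Sp _ Ss) => _ [[//|s_st] _].
case: (eqVneq s st) => [->|/eqP s_ne]; first exact: fsqsub_refl.
have [a [b [ab ha hb Sa Sb]]] := branching_two_children (Sbranch s (conj Ss (fsqsub_refl s))).
have child_below c : S (s `|` [fset c])%fset -> fsqsub (s `|` [fset c])%fset st.
  move=> Sc; case: (Sp _ Sc) => _ [[st_c|//] _].
  by case: (fsqsub_extend_between s_st st_c) => [/esym//|<-]; apply: fsqsub_refl.
by case: ab; apply: fsqsub_extend_inj ha hb (child_below _ Sa) (child_below _ Sb).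
Qed.

Lemma pruned_subtree_mixed S : alpha_tree U alpha S -> S `<=` pruned ->
  ~ (body S `<=` Q) /\ body S `&` Q !=set0.
Proof.
move=> [Stree [s [Sstem _ Sbranch]]] Sp; have [Ss _ _] := Sstem.
have ns : ~ settled s.
  have [_ [_ hs]] := Sp _ Ss.
  exact: hs (pruned_subtree_stem_above Sp Sstem Sbranch) (fsqsub_refl s).
have ST : S `<=` T by move=> t /Sp [].
split=> [SQ|]; first by apply: ns; left; exists S.
apply: contrapT => hne; apply: ns; right; exists S; split=> // Y SY QY.
by apply: hne; exists Y.
Qed.

End Pruning.
End AlphaTrees.

Theorem mainTheorem1 (U : set (set nat)) (HU : nonprincipal_ultrafilter U)
  (alpha : {fset nat} -> nat -> nat)
  (Halpha : forall s : {fset nat}, nonstandard U (alpha s))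
  (calX : set (set nat)) (HX : calX `<=` infinite_subset)
  (T : set {fset nat}) (HT : alpha_tree U alpha T) :
  exists S : set {fset nat},
    [/\ alpha_tree U alpha S, S `<=` T,
        (exists st, is_stem S st /\ is_stem T st) &
        [\/ body S `<=` calX,
            body S `&` calX = set0 |
            forall S' : set {fset nat}, alpha_tree U alpha S' -> S' `<=` S ->
              ~ (body S' `<=` calX) /\ body S' `&` calX !=set0 ]].
Proof.
case: HT => Ttree [st [Tstem _ Tbranch]]; have [Tst _ _] := Tstem.
have [[[S [Stree Sstem Sbranch ST SX]]|[S [Stree Sstem Sbranch ST SnX]]]|nst] :=
  pselect (settled U alpha T calX st).
- exists S; split=> //; [exact: alpha_treeP Sbranch|by exists st|exact: Or31].
- exists S; split=> //; [exact: alpha_treeP Sbranch|by exists st|].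
  by apply: Or32; apply/disjoints_subset.
- pose S := pruned U alpha T calX st.
  have Sstem : is_stem S st by apply: pruned_stem.
  have Sbranch : alpha_branching U alpha S st by apply: pruned_branching.
  exists S; split.
  + by apply: alpha_treeP Sstem Sbranch; apply: pruned_tree.
  + by move=> t [].
  + by exists st.
  + by apply: Or33 => S' S'tree S'sub; apply: pruned_subtree_mixed S'sub.
Qed.
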